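(* Let $R\ge1$ and $\mathbf{x}$ a vector of pairwise distinct reals. Then $$\max_{1\le m\le R}\sum_{n=1}^R a_{m,n}^2\le\Vert A(\mathbf{x})\Vert^2\le 3\max_{1\le m\le R}\sum_{n=1}^R a_{m,n}^2.$$
   Context: $A(\mathbf{x})$ is the $R\times R$ matrix with entries $a_{m,m}=0$ and $a_{m,n}=\frac{1}{x_m-x_n}$ for $m\ne n$; $\Vert\cdot\Vert$ is the operator norm induced by the Euclidean norm. *)

From Stdlib Require Import Reals Lra Lia Arith ClassicalEpsilon.
Open Scope R_scope.

Fixpoint sumR (n : nat) (f : nat -> R) : R :=
  match n with O => 0 | S k => sumR k f + f k end.

(* maxR n f = max (f 0, ..., f (n-1)) for n >= 1 and nonnegative f
   (base value 0; used only on nonnegative quantities with n >= 1). *)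
Fixpoint maxR (n : nat) (f : nat -> R) : R :=
  match n with O => 0 | S k => Rmax (maxR k f) (f k) end.

(* entries of A(x), indices 0..N-1 *)
Definition amat (x : nat -> R) (m n : nat) : R :=
  if Nat.eq_dec m n then 0 else / (x m - x n).

Definition vnorm2 (N : nat) (v : nat -> R) : R := sumR N (fun i => v i ^ 2).

Definition applyA (N : nat) (x : nat -> R) (v : nat -> R) (m : nat) : R :=
  sumR N (fun n => amat x m n * v n).

Definition opset (N : nat) (x : nat -> R) (r : R) : Prop :=
  exists v : nat -> R, vnorm2 N v <= 1 /\ r = sqrt (vnorm2 N (applyA N x v)).

(* operator norm = sup of the above set (which is bounded and nonempty) *)
Definition opnorm (N : nat) (x : nat -> R) : R :=
  match excluded_middle_informative (exists s, is_lub (opset N x) s) with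
  | left H => proj1_sig (constructive_indefinite_description _ H)
  | right _ => 0
  end.

(* Lower bound: A applied to a basis vector e_m is the m-th column of A, whose
   squared norm equals the m-th row sum of squares because A is antisymmetric.

   Upper bound: for pairwise distinct nodes the entries satisfy the three-term
   identity a_{mn} a_{mk} = a_{kn} a_{mk} - a_{kn} a_{mn} (m, n, k distinct).
   Expanding |Av|^2 = sum_{m,n,k} a_{mn} a_{mk} v_n v_k with it yields
     |Av|^2 = Q(v) - 2 sum_k s_k v_k (Av)_k,     Q(v) <= 3 M |v|^2,
   where s_k is the k-th row sum and M the largest row sum of squares.  If v
   satisfied A^2 v = -mu v with mu = |A|^2, adding this identity for v (times
   mu) and for Av would cancel the s-terms and give mu <= 3 M.  Lacking a
   spectral theorem we use near-maximisers of |Av| instead: the residual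
   A^2 v + mu v is controlled by the deficit mu - |Av|^2, and letting the
   deficit tend to 0 gives the same conclusion. *)

From Stdlib Require Import Reals Lra Lia Psatz Classical ClassicalEpsilon.
Open Scope R_scope.

Lemma sumR_ext n f g : (forall i, (i < n)%nat -> f i = g i) -> sumR n f = sumR n g.
Proof.
  induction n as [|n IH]; intros H; simpl; [reflexivity|].
  rewrite IH by (intros; apply H; lia). rewrite H by lia. reflexivity.
Qed.

Lemma sumR_zero n : sumR n (fun _ => 0) = 0.
Proof. induction n as [|n IH]; simpl; [|rewrite IH]; ring. Qed.

Lemma sumR_plus n f g : sumR n (fun i => f i + g i) = sumR n f + sumR n g.
Proof. induction n as [|n IH]; simpl; [|rewrite IH]; ring. Qed.

Lemma sumR_minus n f g : sumR n (fun i => f i - g i) = sumR n f - sumR n g.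
Proof. induction n as [|n IH]; simpl; [|rewrite IH]; ring. Qed.

Lemma sumR_opp n f : sumR n (fun i => - f i) = - sumR n f.
Proof. induction n as [|n IH]; simpl; [|rewrite IH]; ring. Qed.

Lemma sumR_scal n c f : sumR n (fun i => c * f i) = c * sumR n f.
Proof. induction n as [|n IH]; simpl; [|rewrite IH]; ring. Qed.

Lemma sumR_scal_r n c f : sumR n (fun i => f i * c) = sumR n f * c.
Proof. induction n as [|n IH]; simpl; [|rewrite IH]; ring. Qed.

Lemma sumR_le n f g : (forall i, (i < n)%nat -> f i <= g i) -> sumR n f <= sumR n g.
Proof.
  induction n as [|n IH]; intros H; simpl; [lra|].
  apply Rplus_le_compat; [apply IH; intros; apply H|apply H]; lia.
Qed.

Lemma sumR_nonneg n f : (forall i, (i < n)%nat -> 0 <= f i) -> 0 <= sumR n f.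
Proof. intros H. rewrite <- (sumR_zero n). now apply sumR_le. Qed.

Lemma sumR_term_le n f k :
  (forall i, (i < n)%nat -> 0 <= f i) -> (k < n)%nat -> f k <= sumR n f.
Proof.
  induction n as [|n IH]; intros H Hk; [lia|]. simpl.
  destruct (Nat.eq_dec k n) as [->|Hkn].
  - assert (0 <= sumR n f) by (apply sumR_nonneg; intros; apply H; lia). lra.
  - assert (f k <= sumR n f) by (apply IH; [intros; apply H|]; lia).
    pose proof (H n ltac:(lia)). lra.
Qed.

Lemma sumR_swap n m f :
  sumR n (fun i => sumR m (fun j => f i j)) = sumR m (fun j => sumR n (fun i => f i j)).
Proof.
  induction n as [|n IH]; simpl.
  - symmetry. apply sumR_zero.
  - rewrite IH, <- sumR_plus. reflexivity.
Qed.

Lemma sumR_mult n m f g :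
  sumR n f * sumR m g = sumR n (fun i => sumR m (fun j => f i * g j)).
Proof.
  rewrite <- sumR_scal_r. apply sumR_ext; intros. rewrite <- sumR_scal. reflexivity.
Qed.

Lemma sumR_delta n k f :
  (k < n)%nat -> sumR n (fun i => if Nat.eq_dec k i then f i else 0) = f k.
Proof.
  induction n as [|n IH]; intros Hk; [lia|]. simpl.
  destruct (Nat.eq_dec k n) as [->|Hkn].
  - rewrite (sumR_ext n _ (fun _ => 0)), sumR_zero; [ring|].
    intros i Hi. destruct (Nat.eq_dec n i); [lia|reflexivity].
  - rewrite IH by lia. ring.
Qed.

(* Cauchy-Schwarz, via Lagrange's identity
   2 (sum f^2 sum g^2 - (sum f g)^2) = sum_{i,j} (f_i g_j - f_j g_i)^2. *)
Lemma cauchy_schwarz n f g :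
  (sumR n (fun i => f i * g i)) ^ 2
  <= sumR n (fun i => f i ^ 2) * sumR n (fun i => g i ^ 2).
Proof.
  assert (Hlagrange :
    sumR n (fun i => sumR n (fun j => (f i * g j - f j * g i) ^ 2))
    = 2 * (sumR n (fun i => f i ^ 2) * sumR n (fun i => g i ^ 2)
           - (sumR n (fun i => f i * g i)) ^ 2)).
  { rewrite (sumR_ext n _ (fun i => sumR n (fun j => f i ^ 2 * g j ^ 2)
                                  + sumR n (fun j => g i ^ 2 * f j ^ 2)
                                  - 2 * sumR n (fun j => (f i * g i) * (f j * g j)))).
    2:{ intros i _. rewrite <- sumR_scal, <- sumR_plus, <- sumR_minus.
        apply sumR_ext; intros; ring. }
    rewrite sumR_minus, sumR_plus, sumR_scal, <- !sumR_mult. ring. }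
  assert (0 <= sumR n (fun i => sumR n (fun j => (f i * g j - f j * g i) ^ 2))).
  { apply sumR_nonneg; intros; apply sumR_nonneg; intros; apply pow2_ge_0. }
  lra.
Qed.

Lemma young l a b : 0 < l -> 2 * a * b <= l * a ^ 2 + b ^ 2 / l.
Proof.
  intros Hl.
  assert (Hsq : l * (l * a ^ 2 + b ^ 2 / l - 2 * a * b) = (l * a - b) ^ 2)
    by (field; lra).
  assert (0 <= l * (l * a ^ 2 + b ^ 2 / l - 2 * a * b))
    by (rewrite Hsq; apply pow2_ge_0).
  apply Rmult_le_reg_l with l; lra.
Qed.

Lemma maxR_ge n f m : (m < n)%nat -> f m <= maxR n f.
Proof.
  induction n as [|n IH]; intros Hm; [lia|]. simpl.
  destruct (Nat.eq_dec m n) as [->|]; [apply Rmax_r|].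
  eapply Rle_trans; [apply IH; lia|apply Rmax_l].
Qed.

Lemma maxR_le n f B : 0 <= B -> (forall m, (m < n)%nat -> f m <= B) -> maxR n f <= B.
Proof.
  induction n as [|n IH]; intros HB H; simpl; [assumption|].
  apply Rmax_lub; [apply IH; [|intros; apply H]|apply H]; auto; lia.
Qed.

Lemma maxR_nonneg n f : 0 <= maxR n f.
Proof.
  induction n as [|n IH]; simpl; [lra|].
  eapply Rle_trans; [apply IH|apply Rmax_l].
Qed.

Section CauchyMatrix.
Variable N : nat.
Variable x : nat -> R.

Definition rowsq (m : nat) : R := sumR N (fun n => amat x m n ^ 2).
Definition rowsum (m : nat) : R := sumR N (fun n => amat x m n).

Lemma amat_anti m n : amat x m n = - amat x n m.
Proof.
  unfold amat. destruct (Nat.eq_dec m n), (Nat.eq_dec n m); try lia; try ring.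
  replace (x n - x m) with (- (x m - x n)) by ring. rewrite Rinv_opp. ring.
Qed.

Lemma colsum k : sumR N (fun m => amat x m k) = - rowsum k.
Proof.
  unfold rowsum. rewrite <- sumR_opp. apply sumR_ext; intros. apply amat_anti.
Qed.

Lemma colsq k : sumR N (fun m => amat x m k ^ 2) = rowsq k.
Proof. apply sumR_ext; intros. rewrite amat_anti. ring. Qed.

Lemma colA v n : sumR N (fun k => amat x k n * v k) = - applyA N x v n.
Proof.
  unfold applyA. rewrite <- sumR_opp. apply sumR_ext; intros. rewrite amat_anti. ring.
Qed.

Lemma applyA_skew v u :
  sumR N (fun i => v i * applyA N x u i) = - sumR N (fun i => applyA N x v i * u i).
Proof.
  unfold applyA. rewrite <- sumR_opp.
  transitivity (sumR N (fun i => sumR N (fun j => v i * amat x i j * u j))).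
  { apply sumR_ext; intros. rewrite <- sumR_scal. apply sumR_ext; intros; ring. }
  rewrite sumR_swap. apply sumR_ext; intros j _.
  rewrite <- sumR_scal_r, <- sumR_opp. apply sumR_ext; intros i _.
  rewrite (amat_anti i j). ring.
Qed.

Lemma vnorm2_nonneg v : 0 <= vnorm2 N v.
Proof. apply sumR_nonneg; intros; apply pow2_ge_0. Qed.

Lemma vnorm2_scal c v : vnorm2 N (fun i => c * v i) = c ^ 2 * vnorm2 N v.
Proof. unfold vnorm2. rewrite <- sumR_scal. apply sumR_ext; intros; ring. Qed.

Lemma vnorm2_zero : vnorm2 N (fun _ => 0) = 0.
Proof.
  unfold vnorm2. transitivity (sumR N (fun _ => 0)); [|apply sumR_zero].
  apply sumR_ext; intros; ring.
Qed.

Lemma applyA_scal c v m : applyA N x (fun i => c * v i) m = c * applyA N x v m.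
Proof. unfold applyA. rewrite <- sumR_scal. apply sumR_ext; intros; ring. Qed.

Lemma vnorm2_applyA_scal c v :
  vnorm2 N (applyA N x (fun i => c * v i)) = c ^ 2 * vnorm2 N (applyA N x v).
Proof.
  rewrite <- vnorm2_scal. unfold vnorm2. apply sumR_ext; intros. now rewrite applyA_scal.
Qed.

Lemma hilbert_schmidt v : vnorm2 N (applyA N x v) <= sumR N rowsq * vnorm2 N v.
Proof.
  unfold vnorm2 at 1. rewrite <- sumR_scal_r. apply sumR_le; intros m _.
  apply (cauchy_schwarz N (fun n => amat x m n) v).
Qed.

Lemma opnorm_lub : is_lub (opset N x) (opnorm N x).
Proof.
  unfold opnorm. destruct (excluded_middle_informative _) as [H|H].
  - destruct (constructive_indefinite_description _ H) as [s Hs]. exact Hs.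
  - exfalso; apply H. destruct (completeness (opset N x)) as [s Hs]; [| |now exists s].
    + exists (sqrt (sumR N rowsq)). intros r [v [Hv ->]]. apply sqrt_le_1_alt.
      pose proof (hilbert_schmidt v).
      assert (0 <= sumR N rowsq)
        by (apply sumR_nonneg; intros; apply sumR_nonneg; intros; apply pow2_ge_0).
      pose proof (vnorm2_nonneg v). nra.
    + exists (sqrt (vnorm2 N (applyA N x (fun _ => 0)))).
      exists (fun _ => 0). rewrite vnorm2_zero. split; [lra|reflexivity].
Qed.

Lemma opnorm_nonneg : 0 <= opnorm N x.
Proof.
  destruct opnorm_lub as [Hub _].
  eapply Rle_trans; [apply (sqrt_pos (vnorm2 N (applyA N x (fun _ => 0))))|].
  apply Hub. exists (fun _ => 0). rewrite vnorm2_zero. split; [lra|reflexivity].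
Qed.

Lemma opnorm_unit v : vnorm2 N v <= 1 -> vnorm2 N (applyA N x v) <= opnorm N x ^ 2.
Proof.
  intros Hv. pose proof (vnorm2_nonneg (applyA N x v)) as H0.
  rewrite <- (pow2_sqrt _ H0). apply pow_incr. split; [apply sqrt_pos|].
  apply opnorm_lub. exists v. auto.
Qed.

Lemma opnorm_bound v : vnorm2 N (applyA N x v) <= opnorm N x ^ 2 * vnorm2 N v.
Proof.
  set (mu := opnorm N x ^ 2). set (t := vnorm2 N (applyA N x v)).
  assert (Hmu : 0 <= mu) by apply pow2_ge_0.
  destruct (vnorm2_nonneg v) as [Hpos|Hzero].
  -
    set (c := / sqrt (vnorm2 N v)).
    assert (Hc : c ^ 2 * vnorm2 N v = 1).
    { unfold c. rewrite <- (pow2_sqrt (vnorm2 N v)) at 2 by lra.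
      assert (0 < sqrt (vnorm2 N v)) by (apply sqrt_lt_R0; lra). field. lra. }
    pose proof (opnorm_unit (fun i => c * v i)) as Hu.
    rewrite vnorm2_scal, vnorm2_applyA_scal in Hu. specialize (Hu ltac:(lra)).
    fold t mu in Hu.
    replace t with (vnorm2 N v * (c ^ 2 * t))
      by (transitivity ((c ^ 2 * vnorm2 N v) * t); [ring|rewrite Hc; ring]).
    rewrite Rmult_comm. apply Rmult_le_compat_r; lra.
  - (* v has norm 0: any multiple of v is a unit vector, so Av = 0 *)
    rewrite <- Hzero, Rmult_0_r.
    destruct (Rle_or_lt t 0) as [Ht|Ht]; [exact Ht|exfalso].
    pose proof (opnorm_unit (fun i => sqrt ((mu + 1) / t) * v i)) as Hu.
    rewrite vnorm2_scal, vnorm2_applyA_scal, <- Hzero in Hu.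
    specialize (Hu ltac:(lra)). fold t mu in Hu.
    rewrite pow2_sqrt in Hu by (apply Rle_mult_inv_pos; lra).
    field_simplify in Hu; lra.
Qed.

Lemma near_maximizer eta : 0 < eta ->
  exists v, vnorm2 N v <= 1 /\ opnorm N x ^ 2 - eta <= vnorm2 N (applyA N x v).
Proof.
  intros Heta. set (op := opnorm N x). pose proof opnorm_nonneg as Hop. fold op in Hop.
  set (eps := eta / (2 * op + 1)).
  assert (Heps : 0 < eps) by (apply Rdiv_lt_0_compat; lra).
  assert (Hepsop : eps * (2 * op + 1) = eta) by (unfold eps; field; lra).
  destruct (classic (exists r, opset N x r /\ op - eps < r)) as [[r [[v [Hv ->]] Hr]]|Hnone].
  - exists v. split; [exact Hv|].
    set (t := vnorm2 N (applyA N x v)) in *.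
    assert (Ht : 0 <= t) by apply vnorm2_nonneg.
    rewrite <- (pow2_sqrt t Ht). pose proof (sqrt_pos t).
    destruct (Rle_or_lt op (sqrt t)); nra.
  - exfalso. destruct opnorm_lub as [_ Hleast]. fold op in Hleast.
    assert (op <= op - eps); [|lra].
    apply Hleast. intros r Hr. apply Rnot_lt_le. intros Hlt. apply Hnone. eauto.
Qed.

(* Lower bound: A e_m is the m-th column of A, of squared norm rowsq m. *)
Lemma rowsq_le_opnorm m : (m < N)%nat -> rowsq m <= opnorm N x ^ 2.
Proof.
  intros Hm. set (e := fun i => if Nat.eq_dec m i then 1 else 0).
  assert (He : vnorm2 N e = 1).
  { unfold vnorm2. rewrite <- (sumR_delta N m (fun _ => 1) Hm).
    apply sumR_ext; intros. unfold e. destruct (Nat.eq_dec m i); ring. }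
  assert (HAe : forall n, applyA N x e n = amat x n m).
  { intros n. unfold applyA. rewrite <- (sumR_delta N m (fun k => amat x n k) Hm).
    apply sumR_ext; intros. unfold e. destruct (Nat.eq_dec m i); ring. }
  replace (rowsq m) with (vnorm2 N (applyA N x e)).
  - apply opnorm_unit. lra.
  - rewrite <- colsq. apply sumR_ext; intros. now rewrite HAe.
Qed.

(* Expanding |A(Av)|^2 + c |Av|^2 needs the inner product <v, A^2 v> = -|Av|^2. *)
Lemma residual_expand c v :
  vnorm2 N (fun k => - applyA N x (applyA N x v) k - c * v k)
  = vnorm2 N (applyA N x (applyA N x v)) - 2 * c * vnorm2 N (applyA N x v)
    + c ^ 2 * vnorm2 N v.
Proof.
  set (w := applyA N x v). set (z := applyA N x w).
  assert (Hvz : sumR N (fun i => v i * z i) = - vnorm2 N w).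
  { unfold z. rewrite applyA_skew. unfold vnorm2. f_equal.
    apply sumR_ext; intros; fold w; ring. }
  unfold vnorm2 at 1.
  rewrite (sumR_ext N _ (fun i => z i ^ 2 + (2 * c) * (v i * z i) + c ^ 2 * v i ^ 2))
    by (intros; ring).
  rewrite !sumR_plus, !sumR_scal, Hvz. unfold vnorm2. ring.
Qed.

Hypothesis Hx : forall i j : nat, (i < N)%nat -> (j < N)%nat -> i <> j -> x i <> x j.

(* Three-term identity: for distinct m, n, k,
   a_{mn} a_{mk} = a_{kn} a_{mk} - a_{kn} a_{mn}
   (partial fractions for 1/((x_m - x_n)(x_m - x_k))); the delta terms make it
   valid for all index triples. *)
Lemma amat_three_term m n k : (m < N)%nat -> (n < N)%nat -> (k < N)%nat ->
  amat x m n * amat x m k =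
    amat x k n * amat x m k - amat x k n * amat x m n
    + (if Nat.eq_dec n k then amat x m n ^ 2 else 0)
    + (if Nat.eq_dec m n then amat x m k ^ 2 else 0)
    + (if Nat.eq_dec m k then amat x m n ^ 2 else 0).
Proof.
  intros Hm Hn Hk.
  assert (Hd : forall i j, (i < N)%nat -> (j < N)%nat -> i <> j -> x i - x j <> 0)
    by (intros i j Hi Hj Hij; apply Rminus_eq_contra, Hx; assumption).
  unfold amat; repeat destruct (Nat.eq_dec _ _); subst; try congruence; try ring;
    field; repeat split; apply Hd; auto; lia.
Qed.

(* Triple sums over {0..N-1}^3; |Av|^2 is such a sum, and the three-term
   identity splits it into five sums evaluated separately below. *)
Definition sum3 (f : nat -> nat -> nat -> R) : R :=
  sumR N (fun m => sumR N (fun n => sumR N (fun k => f m n k))).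

Lemma sum3_plus f g : sum3 (fun m n k => f m n k + g m n k) = sum3 f + sum3 g.
Proof.
  unfold sum3. rewrite <- sumR_plus. apply sumR_ext; intros.
  rewrite <- sumR_plus. apply sumR_ext; intros. apply sumR_plus.
Qed.

Lemma sum3_minus f g : sum3 (fun m n k => f m n k - g m n k) = sum3 f - sum3 g.
Proof.
  unfold sum3. rewrite <- sumR_minus. apply sumR_ext; intros.
  rewrite <- sumR_minus. apply sumR_ext; intros. apply sumR_minus.
Qed.

Lemma sum3_square v :
  vnorm2 N (applyA N x v) = sum3 (fun m n k => amat x m n * amat x m k * (v n * v k)).
Proof.
  unfold vnorm2, applyA, sum3. apply sumR_ext; intros m _.
  rewrite <- Rsqr_pow2. unfold Rsqr. rewrite sumR_mult.
  apply sumR_ext; intros; apply sumR_ext; intros; ring.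
Qed.

Lemma sum3_term1 v :
  sum3 (fun m n k => amat x k n * amat x m k * (v n * v k))
  = - sumR N (fun k => rowsum k * v k * applyA N x v k).
Proof.
  unfold sum3.
  rewrite (sumR_ext N _ (fun m => sumR N (fun k => sumR N (fun n =>
             amat x k n * amat x m k * (v n * v k))))) by (intros; apply sumR_swap).
  rewrite sumR_swap, <- sumR_opp. apply sumR_ext; intros k _.
  replace (- (rowsum k * v k * applyA N x v k))
    with (sumR N (fun m => amat x m k) * applyA N x v k * v k) by (rewrite colsum; ring).
  unfold applyA. rewrite sumR_mult, <- sumR_scal_r. apply sumR_ext; intros.
  rewrite <- sumR_scal_r. apply sumR_ext; intros; ring.
Qed.

Lemma sum3_term2 v :
  sum3 (fun m n k => amat x k n * amat x m n * (v n * v k))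
  = sumR N (fun n => rowsum n * v n * applyA N x v n).
Proof.
  unfold sum3. rewrite sumR_swap. apply sumR_ext; intros n _.
  replace (rowsum n * v n * applyA N x v n)
    with (sumR N (fun m => amat x m n) * sumR N (fun k => amat x k n * v k) * v n)
    by (rewrite colsum, colA; ring).
  rewrite sumR_mult, <- sumR_scal_r. apply sumR_ext; intros.
  rewrite <- sumR_scal_r. apply sumR_ext; intros; ring.
Qed.

Lemma sum3_term3 v :
  sum3 (fun m n k => (if Nat.eq_dec n k then amat x m n ^ 2 else 0) * (v n * v k))
  = sumR N (fun n => rowsq n * v n ^ 2).
Proof.
  unfold sum3. rewrite sumR_swap. apply sumR_ext; intros n Hn.
  rewrite <- colsq, <- sumR_scal_r. apply sumR_ext; intros m _.
  transitivity (amat x m n ^ 2 * (v n * v n)); [|ring].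
  rewrite <- (sumR_delta N n (fun k => amat x m n ^ 2 * (v n * v k)) Hn).
  apply sumR_ext; intros. destruct (Nat.eq_dec n i); ring.
Qed.

Definition crossform (v : nat -> R) : R :=
  sumR N (fun m => sumR N (fun k => amat x m k ^ 2 * (v m * v k))).

Lemma sum3_term4 v :
  sum3 (fun m n k => (if Nat.eq_dec m n then amat x m k ^ 2 else 0) * (v n * v k))
  = crossform v.
Proof.
  unfold sum3, crossform. apply sumR_ext; intros m Hm.
  rewrite <- (sumR_delta N m (fun n => sumR N (fun k => amat x m k ^ 2 * (v n * v k))) Hm).
  apply sumR_ext; intros n _. destruct (Nat.eq_dec m n); [reflexivity|].
  transitivity (sumR N (fun _ => 0)); [apply sumR_ext; intros; ring|apply sumR_zero].
Qed.

Lemma sum3_term5 v :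
  sum3 (fun m n k => (if Nat.eq_dec m k then amat x m n ^ 2 else 0) * (v n * v k))
  = crossform v.
Proof.
  unfold sum3, crossform. apply sumR_ext; intros m Hm. apply sumR_ext; intros n _.
  transitivity (amat x m n ^ 2 * (v n * v m)); [|ring].
  rewrite <- (sumR_delta N m (fun k => amat x m n ^ 2 * (v n * v k)) Hm).
  apply sumR_ext; intros. destruct (Nat.eq_dec m i); ring.
Qed.

Definition qform (v : nat -> R) : R := sumR N (fun n => rowsq n * v n ^ 2) + 2 * crossform v.

Lemma quadratic_identity v :
  vnorm2 N (applyA N x v) = qform v - 2 * sumR N (fun k => rowsum k * v k * applyA N x v k).
Proof.
  rewrite sum3_square.
  transitivity (
      sum3 (fun m n k => amat x k n * amat x m k * (v n * v k))
    - sum3 (fun m n k => amat x k n * amat x m n * (v n * v k))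
    + sum3 (fun m n k => (if Nat.eq_dec n k then amat x m n ^ 2 else 0) * (v n * v k))
    + sum3 (fun m n k => (if Nat.eq_dec m n then amat x m k ^ 2 else 0) * (v n * v k))
    + sum3 (fun m n k => (if Nat.eq_dec m k then amat x m n ^ 2 else 0) * (v n * v k))).
  - rewrite <- sum3_minus, <- !sum3_plus. unfold sum3.
    apply sumR_ext; intros m Hm; apply sumR_ext; intros n Hn; apply sumR_ext; intros k Hk.
    rewrite (amat_three_term m n k) by assumption. ring.
  - rewrite sum3_term1, sum3_term2, sum3_term3, sum3_term4, sum3_term5. unfold qform. ring.
Qed.

(* Q(v) <= 3 M |v|^2 when every row sum of squares is at most M: the diagonal
   part contributes M |v|^2 and, by 2 v_m v_k <= v_m^2 + v_k^2 and symmetry of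
   a_{mk}^2, the cross part at most 2 M |v|^2. *)
Lemma qform_bound M v :
  (forall n, (n < N)%nat -> rowsq n <= M) -> qform v <= 3 * M * vnorm2 N v.
Proof.
  intros HM. unfold qform, crossform, vnorm2.
  assert (Hdiag : sumR N (fun n => rowsq n * v n ^ 2) <= M * sumR N (fun n => v n ^ 2)).
  { rewrite <- sumR_scal. apply sumR_le; intros.
    apply Rmult_le_compat_r; [apply pow2_ge_0|auto]. }
  assert (Hcross :
    2 * sumR N (fun m => sumR N (fun k => amat x m k ^ 2 * (v m * v k)))
    <= sumR N (fun m => sumR N (fun k => amat x m k ^ 2 * v m ^ 2))
       + sumR N (fun m => sumR N (fun k => amat x m k ^ 2 * v k ^ 2))).
  { rewrite <- sumR_scal, <- sumR_plus. apply sumR_le; intros m _.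
    rewrite <- sumR_scal, <- sumR_plus. apply sumR_le; intros k _.
    assert (0 <= amat x m k ^ 2 * (v m - v k) ^ 2)
      by (apply Rmult_le_pos; apply pow2_ge_0).
    nra. }
  assert (Hrows : sumR N (fun m => sumR N (fun k => amat x m k ^ 2 * v m ^ 2))
                  = sumR N (fun n => rowsq n * v n ^ 2))
    by (apply sumR_ext; intros; apply sumR_scal_r).
  assert (Hcols : sumR N (fun m => sumR N (fun k => amat x m k ^ 2 * v k ^ 2))
                  = sumR N (fun n => rowsq n * v n ^ 2)).
  { rewrite sumR_swap. apply sumR_ext; intros. now rewrite sumR_scal_r, colsq. }
  lra.
Qed.

(* Adding the quadratic identity for v (times c) and for Av: the row-sum terms
   combine into a single term weighted by the residual -A^2 v - c v, which
   vanishes when v is a singular vector with singular value c^(1/2). *)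
Lemma energy_identity c v :
  c * vnorm2 N (applyA N x v) + vnorm2 N (applyA N x (applyA N x v))
  = c * qform v + qform (applyA N x v)
    + 2 * sumR N (fun k => rowsum k * applyA N x v k
                           * (- applyA N x (applyA N x v) k - c * v k)).
Proof.
  rewrite (quadratic_identity v), (quadratic_identity (applyA N x v)).
  rewrite (sumR_ext N (fun k => rowsum k * applyA N x v k
                                 * (- applyA N x (applyA N x v) k - c * v k))
                     (fun k =>
             - (rowsum k * applyA N x v k * applyA N x (applyA N x v) k)
             + (- c) * (rowsum k * v k * applyA N x v k))) by (intros; ring).
  rewrite sumR_plus, sumR_opp, sumR_scal. ring.
Qed.

(* Quantitative form of the upper bound for a vector v of the unit ball: with
   mu = |A|^2 and deficit delta = mu - |Av|^2, for every l > 0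
     2 (mu - 3M) mu <= (3 delta + l S + delta / l) mu,   S = sum_k s_k^2.
   The residual r = -A^2 v - mu v satisfies |r|^2 <= mu delta, and the cross
   term 2 sum_k s_k (Av)_k r_k is split by Young's inequality. *)
Lemma defect_inequality M v l :
  0 <= M -> (forall n, (n < N)%nat -> rowsq n <= M) -> 0 < l -> vnorm2 N v <= 1 ->
  2 * (opnorm N x ^ 2 - 3 * M) * opnorm N x ^ 2
  <= (3 * (opnorm N x ^ 2 - vnorm2 N (applyA N x v))
      + l * sumR N (fun k => rowsum k ^ 2)
      + (opnorm N x ^ 2 - vnorm2 N (applyA N x v)) / l) * opnorm N x ^ 2.
Proof.
  intros HM0 HM Hl Hv.
  pose proof (energy_identity (opnorm N x ^ 2) v) as Henergy.
  pose proof (residual_expand (opnorm N x ^ 2) v) as Hresidual.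
  pose proof (qform_bound M v HM) as HQv.
  pose proof (qform_bound M (applyA N x v) HM) as HQw.
  pose proof (opnorm_unit v Hv) as Ht.
  pose proof (opnorm_bound (applyA N x v)) as Hz.
  set (mu := opnorm N x ^ 2) in *.
  set (S := sumR N (fun k => rowsum k ^ 2)).
  set (w := applyA N x v) in *. set (z := applyA N x w) in *.
  set (r := fun k => - z k - mu * v k) in *.
  change (fun k => rowsum k * w k * (- z k - mu * v k))
    with (fun k => rowsum k * w k * r k) in Henergy.
  set (t := vnorm2 N w) in *. set (nu := vnorm2 N v) in *.
  assert (Hmu : 0 <= mu) by apply pow2_ge_0.
  assert (Hr0 : 0 <= vnorm2 N r) by apply vnorm2_nonneg.
  assert (Hres_small : vnorm2 N r <= mu * (mu - t)).
  { assert (mu * mu * nu <= mu * mu * 1) by (apply Rmult_le_compat_l; nra). nra. }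
  assert (Hsw : sumR N (fun k => (rowsum k * w k) ^ 2) <= S * t).
  { unfold t, vnorm2. rewrite <- sumR_scal. apply sumR_le; intros k Hk.
    assert (rowsum k ^ 2 <= S)
      by (apply (sumR_term_le N (fun i => rowsum i ^ 2)); [intros; apply pow2_ge_0|auto]).
    pose proof (pow2_ge_0 (w k)). nra. }
  assert (Hcross : 2 * sumR N (fun k => rowsum k * w k * r k)
                   <= l * (S * t) + vnorm2 N r / l).
  { apply Rle_trans with (l * sumR N (fun k => (rowsum k * w k) ^ 2) + vnorm2 N r / l).
    - unfold vnorm2, Rdiv. rewrite <- sumR_scal, <- sumR_scal_r, <- sumR_scal, <- sumR_plus.
      apply sumR_le; intros k _.
      pose proof (young l (rowsum k * w k) (r k) Hl). unfold Rdiv in *. lra.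
    - apply Rplus_le_compat_r, Rmult_le_compat_l; lra. }
  assert (Hdiv : vnorm2 N r / l <= (mu - t) / l * mu).
  { unfold Rdiv. pose proof (Rinv_0_lt_compat l Hl). nra. }
  assert (mu * qform v <= mu * (3 * M)) by (apply Rmult_le_compat_l; nra).
  assert (l * (S * t) <= l * S * mu).
  { assert (0 <= S) by (apply sumR_nonneg; intros; apply pow2_ge_0).
    rewrite <- Rmult_assoc. apply Rmult_le_compat_l; [apply Rmult_le_pos|]; lra. }
  assert (M * t <= M * mu) by (apply Rmult_le_compat_l; lra).
  assert (mu ^ 2 * nu <= mu ^ 2) by nra.
  lra.
Qed.

(* Upper bound: letting the deficit tend to 0 in [defect_inequality] forces
   |A|^2 <= 3 M. *)
Lemma opnorm_upper M :
  0 <= M -> (forall n, (n < N)%nat -> rowsq n <= M) -> opnorm N x ^ 2 <= 3 * M.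
Proof.
  intros HM0 HM. set (mu := opnorm N x ^ 2).
  destruct (Rle_or_lt mu (3 * M)) as [Hle|Hgt]; [exact Hle|exfalso].
  set (g := mu - 3 * M). assert (Hg : 0 < g) by (unfold g; lra).
  set (S := sumR N (fun k => rowsum k ^ 2)).
  assert (HS : 0 <= S) by (apply sumR_nonneg; intros; apply pow2_ge_0).
  set (l := g / (S + 1)).
  assert (Hl : 0 < l) by (apply Rdiv_lt_0_compat; lra).
  assert (HlS : l * S < g).
  { unfold l. apply Rmult_lt_reg_r with (S + 1); [lra|].
    replace (g / (S + 1) * S * (S + 1)) with (g * S) by (field; lra). nra. }
  set (eta := g * l / (2 * (3 * l + 1))).
  assert (Heta : 0 < eta) by (apply Rdiv_lt_0_compat; nra).
  assert (Heta_small : 3 * eta + eta / l = g / 2) by (unfold eta; field; lra).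
  destruct (near_maximizer eta Heta) as [v [Hv Hnear]]. fold mu in Hnear.
  pose proof (defect_inequality M v l HM0 HM Hl Hv) as Hdef. fold mu S in Hdef.
  set (delta := mu - vnorm2 N (applyA N x v)) in Hdef.
  assert (Hdelta : delta / l <= eta / l)
    by (apply Rmult_le_compat_r; [left; apply Rinv_0_lt_compat|unfold delta]; lra).
  assert (2 * g <= 3 * delta + l * S + delta / l)
    by (apply Rmult_le_reg_r with mu; unfold g in *; lra).
  unfold delta in *. lra.
Qed.

End CauchyMatrix.

Theorem corollary2 (N : nat) (x : nat -> R)
  (HN : (1 <= N)%nat)
  (Hx : forall i j : nat, (i < N)%nat -> (j < N)%nat -> i <> j -> x i <> x j) :
  maxR N (fun m => sumR N (fun n => amat x m n ^ 2)) <= opnorm N x ^ 2 /\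
  opnorm N x ^ 2 <= 3 * maxR N (fun m => sumR N (fun n => amat x m n ^ 2)).
Proof.
  split.
  - apply maxR_le; [apply pow2_ge_0|].
    intros m Hm. exact (rowsq_le_opnorm N x m Hm).
  - apply (opnorm_upper N x Hx); [apply maxR_nonneg|].
    intros n Hn. exact (maxR_ge N (fun m => sumR N (fun n => amat x m n ^ 2)) n Hn).
Qed.
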